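(* Fix $\alpha>1$, a Pufferfish scenario $(\mathcal S,\mathcal Q,\Theta)$ and a slice profile $(\mathcal U,\omega)$. If a mechanism $\mathcal M$ satisfies $(\alpha,\epsilon,\omega)$-Joint-SRPP in $(\mathcal S,\mathcal Q,\Theta)$, then for any $\delta\in(0,1)$ it satisfies $(\epsilon',\delta,\omega)$-Joint-SPP in $(\mathcal S,\mathcal Q,\Theta)$ with $\epsilon'=\epsilon+\frac{\log(1/\delta)}{\alpha-1}$.
   Context: Pufferfish scenario: secrets $\mathcal S$, pairs $\mathcal Q\subseteq\mathcal S\times\mathcal S$, priors $\Theta$, each a joint law of secret $S$ and dataset $X$ with secret marginal $P^S_\theta$; $\mathcal M^\theta_s$ is the law of $\mathcal M(X)\in\mathbb R^d$ given $S=s$ under $\theta$. Slice profile: $\mathcal U\subseteq\mathbb S^{d-1}$, $\omega$ a probability measure on the unit sphere supported on $\mathcal U$; $\Psi^u(a)=\langle a,u\rangle$, $\Psi^u_\#$ pushforward. $\mathtt D_\alpha$ is R\'enyi divergence. $\mathcal M$ is $(\alpha,\epsilon,\omega)$-Joint-SRPP if $\frac1{\alpha-1}\log\int\exp((\alpha-1)\mathtt D_\alpha(\Psi^u_\#\mathcal M^\theta_{s_i}\|\Psi^u_\#\mathcal M^\theta_{s_j}))\,d\omega(u)\le\epsilon$ for all $\theta\in\Theta$ and $(s_i,s_j)\in\mathcal Q$ with $P^S_\theta(s_i),P^S_\theta(s_j)>0$. Joint-SPP: let $V\sim\omega$ be independent of $X$ and of the internal randomness of $\mathcal M$, and $\widetilde{\mathcal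 M}(X)=(V,\Psi^V(\mathcal M(X)))$. $\mathcal M$ is $(\varepsilon,\delta,\omega)$-Joint-SPP if for all such $\theta$, $(s_i,s_j)$ and measurable $A$, $\Pr(\widetilde{\mathcal M}(X)\in A\mid s_i,\theta)\le e^\varepsilon\Pr(\widetilde{\mathcal M}(X)\in A\mid s_j,\theta)+\delta$. *)

From HB Require Import structures.
From mathcomp Require Import all_boot all_order all_algebra.
From mathcomp Require Import all_classical all_reals all_analysis.
Set Implicit Arguments. Unset Strict Implicit. Unset Printing Implicit Defensive.
Import Order.TTheory GRing.Theory Num.Theory.
Local Open Scope classical_set_scope.
Local Open Scope ring_scope.

(* R^n is modelled by n.-tuple R with its product (= Borel) sigma-algebra. *)

Section slices.
Context {R : realType} {n : nat}.

Definition inner (a u : n.-tuple R) : R := \sum_(i < n) tnth a i * tnth u i.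

Definition unit_sphere : set (n.-tuple R) :=
  [set u | \sum_(i < n) tnth u i ^+ 2 = 1].

Definition Psi (u : n.-tuple R) : n.-tuple R -> R := fun a => inner a u.

Lemma measurable_Psi (u : n.-tuple R) : measurable_fun [set: n.-tuple R] (Psi u).
Proof.
rewrite /Psi /inner; apply: measurable_sum => i.
apply: measurable_realfun.measurable_funM; first exact: measurable_tnth.
exact: measurable_cst.
Qed.

Section slice_mfun.
Variable u : n.-tuple R.
HB.instance Definition _ := isMeasurableFun.Build _ _ _ _ (Psi u)
  (measurable_Psi u).
End slice_mfun.

Definition slice_law (u : n.-tuple R) (P : probability (n.-tuple R) R)
  : probability R R := distribution P (Psi u).

End slices.

Local Open Scope ereal_scope.

Definition renyi_div {d} {T : measurableType d} {R : realType} (alpha : R)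
    (P Q : probability T R) : \bar R :=
  if pselect (charge_of_finite_measure P `<< Q) then
    ((alpha - 1)^-1)%:E *
      lne (\int[Q]_x expeR (alpha%:E *
             lne (Radon_Nikodym (charge_of_finite_measure P) Q x)))
  else +oo.

Definition slice_profile {R : realType} {n : nat} (U : set (n.-tuple R))
    (omega : probability (n.-tuple R) R) : Prop :=
  U `<=` unit_sphere /\
  (forall A, measurable A -> A `&` U = set0 -> omega A = 0).

(* A Pufferfish scenario (S, Q, Theta) together with a mechanism M is
   represented by:
     Q      : the set of secret pairs (as a relation on secrets),
     PS     : PS theta s = P^S_theta(s), the secret marginal,
     Mlaw   : Mlaw theta s = M^theta_s, the law of M(X) given S = s under theta. *)

Definition joint_SRPP {R : realType} {n : nat} {Theta Sec : Type}
    (Q : Sec -> Sec -> Prop) (PS : Theta -> Sec -> R)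
    (Mlaw : Theta -> Sec -> probability (n.-tuple R) R)
    (omega : probability (n.-tuple R) R) (alpha eps : R) : Prop :=
  forall (theta : Theta) (si sj : Sec), Q si sj ->
    (0 < PS theta si)%R -> (0 < PS theta sj)%R ->
    ((alpha - 1)^-1)%:E *
      lne (\int[omega]_u expeR ((alpha - 1)%:E *
             renyi_div alpha (slice_law u (Mlaw theta si))
                             (slice_law u (Mlaw theta sj))))
    <= eps%:E.

(* Law of Mtilde(X) = (V, Psi^V(M(X))) given S = s, where V ~ omega is
   independent of X and of the mechanism's randomness: the image of the
   product law omega (x) M^theta_s under (u, a) |-> (u, <a, u>). *)
Definition sliced_law {R : realType} {n : nat}
    (omega : probability (n.-tuple R) R) (P : probability (n.-tuple R) R)
    : set (n.-tuple R * R) -> \bar R :=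
  fun A => (omega \x P) ((fun p : n.-tuple R * n.-tuple R =>
                            (p.1, Psi p.1 p.2)) @^-1` A).

Definition joint_SPP {R : realType} {n : nat} {Theta Sec : Type}
    (Q : Sec -> Sec -> Prop) (PS : Theta -> Sec -> R)
    (Mlaw : Theta -> Sec -> probability (n.-tuple R) R)
    (omega : probability (n.-tuple R) R) (eps delta : R) : Prop :=
  forall (theta : Theta) (si sj : Sec), Q si sj ->
    (0 < PS theta si)%R -> (0 < PS theta sj)%R ->
    forall A : set (n.-tuple R * R), measurable A ->
      sliced_law omega (Mlaw theta si) A <=
        (expR eps)%:E * sliced_law omega (Mlaw theta sj) A + delta%:E.

From HB Require Import structures.
From mathcomp Require Import all_boot all_order all_algebra.
From mathcomp Require Import all_classical all_reals all_analysis.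
From mathcomp Require Import measurable_realfun ring lra.
Set Implicit Arguments.
Unset Strict Implicit.
Unset Printing Implicit Defensive.
Import Order.TTheory GRing.Theory Num.Theory.
Local Open Scope classical_set_scope.
Local Open Scope ring_scope.

(* Fix a direction u, write P_i, P_j for the two slice laws and rho for the
   density dP_i/dP_j, and let c = exp eps'. The pointwise inequality
   c^(alpha-1) (rho - c)^+ <= rho^alpha integrates to
     c^(alpha-1) (P_i B - c P_j B)^+ <= exp ((alpha-1) D_alpha(P_i || P_j))
   for every Borel B. The sliced output gives A the mass
   \int P^u (A_u) d omega(u), with A_u the section of A at u; integrating the
   slice bound over u and applying Joint-SRPP bounds the excess
   \int (P_i^u (A_u) - c P_j^u (A_u))^+ d omega by
   c^(-(alpha-1)) exp ((alpha-1) eps) = delta. *)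

Section extended_real_bounds.
Local Open Scope ereal_scope.
Context {R : realType}.

Lemma maxe_subr_le_expeR_lne (alpha a : R) (x : \bar R) : (1 < alpha)%R ->
  (expR ((alpha - 1) * a))%:E * maxe (x - (expR a)%:E) 0
    <= expeR (alpha%:E * lne x).
Proof.
move=> a1; have a0 : (0 < alpha)%R by exact: lt_trans a1.
case: x => [r| |]; last first.
- by rewrite addNye maxEle leNye mule0 expeR_ge0.
- rewrite addye// maxEge leey mulry gtr0_sg ?expR_gt0// mul1e /=.
  by rewrite mulry gtr0_sg// mul1e leey.
have [rle|rgt] := leP r (expR a).
  rewrite (_ : maxe _ _ = 0) ?mule0 ?expeR_ge0//.
  by apply/max_idPr; rewrite sube_le0 lee_fin.
have r0 : (0 < r)%R by apply: lt_trans rgt; exact: expR_gt0.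
rewrite /= (leNgt r 0%R) r0 /= -EFin_max -EFinM lee_fin.
rewrite (_ : Num.max (r - expR a) 0 = r - expR a)%R; last first.
  by apply/max_idPl; rewrite subr_ge0 ltW.
(* r^alpha = r * r^(alpha-1) and r^(alpha-1) >= (exp a)^(alpha-1) *)
have : (expR ((alpha - 1) * a) <= expR ((alpha - 1) * ln r))%R.
  by rewrite ler_expR ler_pM2l ?subr_gt0// ltW// -ltr_expR lnK.
rewrite (_ : alpha * ln r = ln r + (alpha - 1) * ln r)%R; last by lra.
rewrite expRD lnK ?posrE//.
have := expR_gt0 ((alpha - 1) * a); have := expR_gt0 a.
nra.
Qed.

Lemma lne_le_expR (k e : R) (x : \bar R) : (0 < k)%R -> 0 <= x ->
  (k^-1)%:E * lne x <= e%:E -> x <= (expR (k * e))%:E.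
Proof.
move=> k0 x0; rewrite lee_pdivrMl// -EFinM -(lee_expeR (lne x)).
by rewrite lneK// in_itv /= x0 leey.
Qed.

End extended_real_bounds.

Section integral_bounds.
Local Open Scope ereal_scope.
Context d (T : measurableType d) (R : realType).
Variable mu : {measure set T -> \bar R}.

(* Nonnegative integrals are suprema over the simple functions below the
   integrand, so neither f nor g has to be measurable. *)
Lemma ge0_le_integralT (f g : T -> \bar R) :
  (forall x, 0 <= f x) -> (forall x, f x <= g x) ->
  \int[mu]_x f x <= \int[mu]_x g x.
Proof.
move=> f0 fg; have g0 x : 0 <= g x by exact: le_trans (fg x).
rewrite !ge0_integralTE//; apply: ereal_sup_le => _ [h hf <-].
by exists h => // x; exact: le_trans (hf x) (fg x).
Qed.

Lemma integral_le_scale_add_funepos (c : R) (f g : T -> \bar R) :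
  (0 <= c)%R -> (forall x, 0 <= f x) -> (forall x, 0 <= g x) ->
  (forall x, g x \is a fin_num) ->
  measurable_fun [set: T] f -> measurable_fun [set: T] g ->
  \int[mu]_x f x <=
    c%:E * \int[mu]_x g x + \int[mu]_x (fun y => f y - c%:E * g y)^\+ x.
Proof.
move=> c0 f0 g0 gfin mf mg.
have mcg : measurable_fun [set: T] (fun x => c%:E * g x).
  exact: measurable_funeM.
have mh : measurable_fun [set: T] (fun y => f y - c%:E * g y)^\+.
  by apply: measurable_funepos; exact: emeasurable_funB.
rewrite -ge0_integralZl_EFin// -ge0_integralD//; last first.
  by move=> x _; exact: mule_ge0.
apply: ge0_le_integral => //; first exact: emeasurable_funD.
move=> x _; rewrite funeposE -leeBlDl ?fin_numM//.
by rewrite le_max lexx.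
Qed.

End integral_bounds.

Section radon_nikodym_tail.
Local Open Scope ereal_scope.
Context d (T : measurableType d) (R : realType).
Variables (nu : {charge set T -> \bar R})
          (mu : {finite_measure set T -> \bar R}).
Hypothesis numu : nu `<< mu.

Lemma charge_sub_le_integral_funepos (c : R) (B : set T) :
  (0 <= c)%R -> measurable B ->
  nu B - c%:E * mu B <=
    \int[mu]_x (fun y => Radon_Nikodym nu mu y - c%:E)^\+ x.
Proof.
move=> c0 mB; set rho := Radon_Nikodym nu mu.
have mrho : measurable_fun [set: T] rho.
  exact: measurable_int (Radon_Nikodym_integrable numu).
set k := (fun y => rho y - c%:E)^\+.
have mk : measurable_fun [set: T] k.
  by apply: measurable_funepos; apply: emeasurable_funB.
have k0 x : 0 <= k x by exact: funepos_ge0.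
rewrite leeBlDl ?fin_numM ?fin_num_measure// (Radon_Nikodym_integral numu mB).
rewrite integralE -/rho; apply: le_trans (geeDl _ _) _.
  by rewrite oppe_le0; apply: integral_ge0 => x _; exact: funeneg_ge0.
apply: (@le_trans _ _ (\int[mu]_(x in B) (c%:E + k x))).
  apply: ge0_le_integral => //.
  - exact/measurable_funTS/measurable_funepos.
  - apply: emeasurable_funD => //; exact: measurable_funTS.
  move=> x _; rewrite /k !funeposE.
  have := Radon_Nikodym_fin_num x numu; rewrite -/rho.
  case: (rho x) => // r _; rewrite -EFinB -!EFin_max -EFinD lee_fin.
  rewrite ge_max; apply/andP; split.
    by rewrite -lerBlDl le_max lexx.
  by rewrite addr_ge0// le_max lexx orbT.
rewrite ge0_integralD//; last exact: measurable_funTS.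
rewrite integral_cst// leeD2l//; apply: ge0_subset_integral => //.
Qed.

End radon_nikodym_tail.

Section renyi_tail.
Local Open Scope ereal_scope.
Context d (T : measurableType d) (R : realType).
Variables (alpha : R) (mu nu : probability T R).

Lemma expeR_renyi_div : alpha != 1%R -> charge_of_finite_measure mu `<< nu ->
  expeR ((alpha - 1)%:E * renyi_div alpha mu nu) =
  \int[nu]_x expeR (alpha%:E *
    lne (Radon_Nikodym (charge_of_finite_measure mu) nu x)).
Proof.
move=> a1 munu; rewrite /renyi_div; case: pselect => // ?.
have I0 : 0 <= \int[nu]_x expeR (alpha%:E *
    lne (Radon_Nikodym (charge_of_finite_measure mu) nu x)).
  by apply: integral_ge0 => x _; exact: expeR_ge0.
rewrite muleA -EFinM mulfV ?subr_eq0// mul1e.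
by rewrite lneK// in_itv/= I0 leey.
Qed.

Lemma renyi_div_tail_bound (a : R) (B : set T) :
  (1 < alpha)%R -> measurable B ->
  (expR ((alpha - 1) * a))%:E * maxe (mu B - (expR a)%:E * nu B) 0
    <= expeR ((alpha - 1)%:E * renyi_div alpha mu nu).
Proof.
move=> a1 mB.
have [munu|munu] := pselect (charge_of_finite_measure mu `<< nu); last first.
  rewrite /renyi_div; case: pselect => // ?.
  by rewrite gt0_muley ?lte_fin ?subr_gt0// leey.
rewrite expeR_renyi_div ?gt_eqF//.
set rho := Radon_Nikodym _ _.
set k := (fun x => rho x - (expR a)%:E)^\+.
have mk : measurable_fun [set: T] k.
  apply: measurable_funepos; apply: emeasurable_funB => //.
  exact: measurable_int (Radon_Nikodym_integrable munu).
apply: (@le_trans _ _ ((expR ((alpha - 1) * a))%:E * \int[nu]_x k x)).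
  apply: lee_wpmul2l; first by rewrite lee_fin expR_ge0.
  rewrite ge_max integral_ge0 ?andbT; last by move=> x _; exact: funepos_ge0.
  by have := charge_sub_le_integral_funepos munu (expR_ge0 a) mB.
rewrite -ge0_integralZl_EFin//; last by move=> x _; exact: funepos_ge0.
apply: ge0_le_integralT => x.
  by apply: mule_ge0; [rewrite lee_fin expR_ge0 | exact: funepos_ge0].
by rewrite /k funeposE; exact: maxe_subr_le_expeR_lne.
Qed.

End renyi_tail.

Section sliced_law.
Local Open Scope ereal_scope.
Context {R : realType} {n : nat}.
Implicit Types (P omega : probability (n.-tuple R) R)
               (A : set (n.-tuple R * R)).

Let slice_pair (p : n.-tuple R * n.-tuple R) : n.-tuple R * R :=
  (p.1, Psi p.1 p.2).

Let measurable_slice_pair :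
  measurable_fun [set: n.-tuple R * n.-tuple R] slice_pair.
Proof.
apply: measurable_fun_pair; first exact: measurable_fst.
apply: measurable_sum => i; apply: measurable_funM.
  exact: measurableT_comp (measurable_tnth i) measurable_snd.
exact: measurableT_comp (measurable_tnth i) measurable_fst.
Qed.

Let xsection_slice_pair A u :
  xsection (slice_pair @^-1` A) u = Psi u @^-1` xsection A u.
Proof. by apply/seteqP; split => y; rewrite /xsection /preimage /= !inE. Qed.

Lemma sliced_lawE omega P A :
  sliced_law omega P A = \int[omega]_u slice_law u P (xsection A u).
Proof.
by apply: eq_integral => u _; rewrite /= -/slice_pair xsection_slice_pair.
Qed.

Lemma measurable_fun_slice_law_xsection P A : measurable A ->
  measurable_fun [set: n.-tuple R] (fun u => slice_law u P (xsection A u)).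
Proof.
move=> mA; rewrite (_ : (fun u => _) = P \o xsection (slice_pair @^-1` A)).
  apply: measurable_fun_xsection; rewrite -[_ @^-1` _]setTI.
  exact: measurable_slice_pair.
by apply/funext => u /=; rewrite xsection_slice_pair.
Qed.

Lemma sliced_law_le omega (Pi Pj : probability (n.-tuple R) R)
    (alpha eps delta : R) A :
  (1 < alpha)%R -> (0 < delta)%R -> measurable A ->
  ((alpha - 1)^-1)%:E *
      lne (\int[omega]_u expeR ((alpha - 1)%:E *
             renyi_div alpha (slice_law u Pi) (slice_law u Pj)))
    <= eps%:E ->
  sliced_law omega Pi A <=
    (expR (eps + ln delta^-1 / (alpha - 1)))%:E * sliced_law omega Pj A
      + delta%:E.
Proof.
move=> a1 d0 mA srpp; have a0 : (0 < alpha - 1)%R by rewrite subr_gt0.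
set a := (eps + ln delta^-1 / (alpha - 1))%R.
set p := fun u => slice_law u Pi (xsection A u).
set q := fun u => slice_law u Pj (xsection A u).
have qfin u : q u \is a fin_num.
  by apply: fin_num_measure; exact: measurable_xsection.
rewrite !sliced_lawE; apply: le_trans (integral_le_scale_add_funepos _
  (expR_ge0 a) _ _ qfin (measurable_fun_slice_law_xsection _ mA)
  (measurable_fun_slice_law_xsection _ mA)) _ => //.
rewrite leeD2l//; set h := (fun u => p u - (expR a)%:E * q u)^\+.
have excess_le : (expR ((alpha - 1) * a))%:E * \int[omega]_u h u
    <= (expR ((alpha - 1) * eps))%:E.
  rewrite -ge0_integralZl_EFin//; last 2 first.
  - by move=> u _; exact: funepos_ge0.
  - apply: measurable_funepos; apply: emeasurable_funB;
      [|apply: measurable_funeM]; exact: measurable_fun_slice_law_xsection.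
  apply: le_trans (lne_le_expR a0 _ srpp); last first.
    by apply: integral_ge0 => u _; exact: expeR_ge0.
  apply: ge0_le_integralT => u.
    by apply: mule_ge0; [rewrite lee_fin expR_ge0 | exact: funepos_ge0].
  rewrite /h funeposE.
  exact: renyi_div_tail_bound a1 (measurable_xsection _ mA).
move: excess_le; rewrite -lee_pdivlMl ?expR_gt0// -EFinM -expRN -expRD.
suff -> : (- ((alpha - 1) * a) + (alpha - 1) * eps = ln delta)%R by rewrite lnK.
by rewrite /a lnV ?posrE//; field; rewrite gt_eqF.
Qed.

End sliced_law.

Theorem theorem9 (R : realType) (alpha : R) (n : nat)
    (Theta Sec : Type) (Q : Sec -> Sec -> Prop) (PS : Theta -> Sec -> R)
    (U : set (n.-tuple R)) (omega : probability (n.-tuple R) R)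
    (Mlaw : Theta -> Sec -> probability (n.-tuple R) R) (eps : R) :
  1 < alpha ->
  slice_profile U omega ->
  joint_SRPP Q PS Mlaw omega alpha eps ->
  forall delta : R, 0 < delta < 1 ->
    joint_SPP Q PS Mlaw omega (eps + ln (delta^-1) / (alpha - 1)) delta.
Proof.
move=> a1 _ srpp delta /andP[d0 _] theta si sj Qij Pi0 Pj0 A mA.
exact: sliced_law_le a1 d0 mA (srpp theta si sj Qij Pi0 Pj0).
Qed.
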